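(* Let $X$ be a separable Banach space, $\mu_{\mathrm{prior}}$ a Borel probability measure on $X$, $\mathcal L^\dagger:X\to\mathbb R^d$ measurable with $\|\mathcal L^\dagger\|_{L^2(\mu_{\mathrm{prior}})}<\infty$, and the noise density $\rho$ satisfy (N.1)–(N.3). Let $\mu^y(d\bar u)=Z^\dagger(y)^{-1}\rho(y-\mathcal L^\dagger(\bar u))\mu_{\mathrm{prior}}(d\bar u)$. There is $C>0$ depending only on $\rho$ such that for all $y,y'\in\mathbb R^d$, $$\Big\|\frac{d\mu^y}{d\mu_{\mathrm{prior}}}-\frac{d\mu^{y'}}{d\mu_{\mathrm{prior}}}\Big\|_{L^\infty(\mu_{\mathrm{prior}})}\le C|y-y'|_\Gamma\exp\big(|y|_\Gamma^2+|y'|_\Gamma^2+2\|\mathcal L^\dagger\|_{L^2(\mu_{\mathrm{prior}})}^2\big).$$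
   Context: $Z^\dagger(y)=\int_X\rho(y-\mathcal L^\dagger(\bar u))\mu_{\mathrm{prior}}(d\bar u)$. $|y|_\Gamma=\langle y,\Gamma^{-1}y\rangle^{1/2}$ for fixed symmetric positive definite $\Gamma$; $\|\mathcal L^\dagger\|_{L^2(\mu_{\mathrm{prior}})}=(\int|\mathcal L^\dagger|_\Gamma^2d\mu_{\mathrm{prior}})^{1/2}$. Noise density $\rho>0$: (N.1) $\rho$ Lipschitz w.r.t. $|\cdot|_\Gamma$ with constant $L_\rho$; (N.2) $\sup\rho<\infty$; (N.3) $\rho(y)\ge C^{-1}e^{-|y|_\Gamma^2/2}$. *)

From HB Require Import structures.
From mathcomp Require Import all_boot all_order all_algebra.
From mathcomp Require Import all_classical all_reals all_analysis.
Set Implicit Arguments. Unset Strict Implicit. Unset Printing Implicit Defensive.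
Import Order.TTheory GRing.Theory Num.Theory.
Import numFieldNormedType.Exports.
Local Open Scope classical_set_scope.
Local Open Scope ring_scope.

Definition borel (X : ptopologicalType) : measurableType _ :=
  g_sigma_algebraType (@open X).

Definition normG {R : realType} {d : nat} (Gamma : 'M[R]_d) (y : 'cV[R]_d) : R :=
  Num.sqrt ((y^T *m invmx Gamma *m y) 0 0).

Definition sym_pos_def {R : realType} {d : nat} (Gamma : 'M[R]_d) : Prop :=
  Gamma^T = Gamma /\ forall v : 'cV[R]_d, v != 0 -> 0 < (v^T *m Gamma *m v) 0 0.

Definition noise_assumptions {R : realType} {d : nat} (Gamma : 'M[R]_d)
  (rho : 'cV[R]_d -> R) : Prop :=
  (forall y, 0 < rho y) /\
  (exists Lrho : R, 0 <= Lrho /\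
     forall y z, `|rho y - rho z| <= Lrho * normG Gamma (y - z)) /\
  (exists M : R, forall y, rho y <= M) /\
  (exists C : R, 0 < C /\
     forall y, C^-1 * expR (- (normG Gamma y ^+ 2) / 2) <= rho y).

Definition Zdag {R : realType} {d : nat} {X : ptopologicalType}
  (mu : probability (borel X) R) (rho : 'cV[R]_d -> R) (L : X -> 'cV[R]_d)
  (y : 'cV[R]_d) : R :=
  fine (\int[mu]_(u in setT) (rho (y - L u))%:E)%E.

Definition post_density {R : realType} {d : nat} {X : ptopologicalType}
  (mu : probability (borel X) R) (rho : 'cV[R]_d -> R) (L : X -> 'cV[R]_d)
  (y : 'cV[R]_d) (u : X) : R :=
  rho (y - L u) / Zdag mu rho L y.

Definition L2norm_sq {R : realType} {d : nat} {X : ptopologicalType}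
  (mu : probability (borel X) R) (Gamma : 'M[R]_d) (L : X -> 'cV[R]_d) : R :=
  fine (\int[mu]_(u in setT) ((normG Gamma (L u)) ^+ 2)%:E)%E.

From HB Require Import structures.
From mathcomp Require Import all_boot all_order all_algebra.
From mathcomp Require Import all_classical all_reals all_analysis.
From mathcomp Require Import ring lra measurable_realfun ess_sup_inf.
Import Order.TTheory GRing.Theory Num.Theory.
Import numFieldNormedType.Exports.
Local Open Scope classical_set_scope.
Local Open Scope ring_scope.
Set Implicit Arguments. Unset Strict Implicit. Unset Printing Implicit Defensive.

(* The density of mu^y is rho (y - L u) / Z(y).  Its numerator is Lipschitz
   in y and bounded by sup rho, and integrating shows that Z is Lipschitz too;
   the real work is a lower bound on Z.  By (N.3) and
   |y - x|^2 <= 2 |y|^2 + 2 |x|^2 we get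
   rho (y - L u) >= C^-1 exp (- |y|^2) exp (- |L u|^2), and Jensen's
   inequality for exp (- .) yields Z(y) >= C^-1 exp (- |y|^2 - ||L||^2).
   Then a/Z - b/Z' = (a - b)/Z + b (Z' - Z)/(Z Z') bounds the difference of
   the two densities uniformly in u. *)

Section QuadraticForm.
Variables (R : realDomainType) (d : nat).

Definition qform (A : 'M[R]_d) (v : 'cV[R]_d) : R :=
  \sum_j (\sum_i v i 0 * A i j) * v j 0.

Lemma qformE (A : 'M[R]_d) (v : 'cV[R]_d) : (v^T *m A *m v) 0 0 = qform A v.
Proof.
rewrite !mxE; apply: eq_bigr => j _; rewrite !mxE; congr (_ * _).
by apply: eq_bigr => i _; rewrite !mxE.
Qed.

Lemma qform_parallelogram (A : 'M[R]_d) (a b : 'cV[R]_d) :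
  qform A (a - b) + qform A (a + b) = 2 * qform A a + 2 * qform A b.
Proof.
rewrite /qform !mulr_sumr -!big_split /=; apply: eq_bigr => j _.
rewrite !mxE !mulr_suml !mulr_sumr -!big_split /=; apply: eq_bigr => i _.
by rewrite !mxE; ring.
Qed.

Lemma qform_le_entries (A : 'M[R]_d) (v : 'cV[R]_d) (e : R) :
  0 <= e -> (forall i, `|v i 0| <= e) ->
  qform A v <= (\sum_j \sum_i `|A i j|) * e ^+ 2.
Proof.
move=> e0 ve; rewrite mulr_suml; apply: le_trans (ler_norm _) _.
apply: le_trans (ler_norm_sum _ _ _) _; apply: ler_sum => j _.
have row_le : `|\sum_i v i 0 * A i j| <= (\sum_i `|A i j|) * e.
  rewrite mulr_suml; apply: le_trans (ler_norm_sum _ _ _) _.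
  by apply: ler_sum => i _; rewrite normrM mulrC ler_wpM2l.
rewrite normrM expr2 mulrA ler_pM ?mulr_ge0 ?sumr_ge0 //.
Qed.

End QuadraticForm.

Section GammaNorm.
Variables (R : realType) (d : nat) (Gamma : 'M[R]_d).

Lemma normGE v : normG Gamma v = Num.sqrt (qform (invmx Gamma) v).
Proof. by rewrite /normG qformE. Qed.

Lemma normG_ge0 v : 0 <= normG Gamma v.
Proof. exact: sqrtr_ge0. Qed.

Hypothesis Gamma_spd : sym_pos_def Gamma.

Lemma qform_invmx_ge0 v : 0 <= qform (invmx Gamma) v.
Proof.
have [Gamma_sym Gamma_pos] := Gamma_spd.
have Gamma_ge0 (w : 'cV[R]_d) : 0 <= (w^T *m Gamma *m w) 0 0.
  have [->|w0] := eqVneq w 0; last exact/ltW/Gamma_pos.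
  by rewrite mulmx0 mxE.
rewrite -qformE; have [Gamma_unit|] := boolP (Gamma \in unitmx); last first.
  by move=> Gamma_sing; rewrite invmx_out ?inE.
have -> : v = Gamma *m (invmx Gamma *m v) by rewrite mulKVmx.
rewrite trmx_mul -!mulmxA (mulmxA (invmx Gamma)) mulVmx // mul1mx Gamma_sym.
by rewrite mulmxA.
Qed.

Lemma normG_sqr v : normG Gamma v ^+ 2 = qform (invmx Gamma) v.
Proof. by rewrite normGE sqr_sqrtr // qform_invmx_ge0. Qed.

Lemma normG_sub_sqr_le a b :
  normG Gamma (a - b) ^+ 2 <= 2 * normG Gamma a ^+ 2 + 2 * normG Gamma b ^+ 2.
Proof.
rewrite !normG_sqr -qform_parallelogram ler_wpDr //.
exact: qform_invmx_ge0.
Qed.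

End GammaNorm.

Section RationalVectors.
Variables (R : realType) (d : nat) (Gamma : 'M[R]_d).
Hypothesis Gamma_spd : sym_pos_def Gamma.

Definition ratcV (n : nat) : 'cV[R]_d :=
  if @unpickle 'cV[rat]_d n is Some q then map_mx ratr q else 0.

Lemma ratcV_dense (x : 'cV[R]_d) (e : R) : 0 < e ->
  exists n, normG Gamma (ratcV n - x) < e.
Proof.
move=> e_gt0; set S := \sum_j \sum_i `|invmx Gamma i j|.
have S_ge0 : 0 <= S by rewrite sumr_ge0 // => j _; rewrite sumr_ge0.
pose del := e / (S + 1).
have del_gt0 : 0 < del by rewrite divr_gt0 // ltr_wpDl.
have /fin_all_exists[q qP] : forall ij : 'I_d * 'I_1, exists q : rat,
    ratr q \in `]x ij.1 ij.2 - del, x ij.1 ij.2 + del[.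
  by move=> ij; apply: rat_in_itvoo; rewrite ltrBlDr -addrA ltrDl addr_gt0.
pose Q : 'cV[rat]_d := \matrix_(i, j) q (i, j).
exists (pickle Q); rewrite /ratcV pickleK.
have close i : `|(map_mx ratr Q - x) i 0| <= del.
  move: (qP (i, 0)); rewrite !mxE in_itv /= => /andP[lo hi].
  by rewrite ler_norml; apply/andP; split; lra.
have Sdel : S * del ^+ 2 < e ^+ 2.
  have -> : e = del * (S + 1) by rewrite divfK // gt_eqF // ltr_wpDl.
  nra.
rewrite normGE -(ger0_norm (ltW e_gt0)) -sqrtr_sqr ltr_sqrt ?exprn_gt0 //.
exact: le_lt_trans (qform_le_entries _ (ltW del_gt0) close) Sdel.
Qed.

End RationalVectors.

Arguments ratcV {R d} n.

Section Measurability.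
Variables (R : realType) (d : nat) (Gamma : 'M[R]_d).
Variables (dT : measure_display) (T : measurableType dT).
Implicit Types F : T -> 'cV[R]_d.

Lemma measurable_cV_subl F (z : 'cV[R]_d) :
  (forall i, measurable_fun setT (fun u => F u i 0)) ->
  forall i, measurable_fun setT (fun u => (z - F u) i 0).
Proof.
move=> mF i; under eq_fun do rewrite !mxE.
exact: measurable_funB.
Qed.

Lemma measurable_qform F (A : 'M[R]_d) :
  (forall i, measurable_fun setT (fun u => F u i 0)) ->
  measurable_fun setT (fun u => qform A (F u)).
Proof.
move=> mF; apply: measurable_sum => j; apply: measurable_funM => //.
by apply: measurable_sum => i; exact: measurable_funM.
Qed.

Lemma measurable_normG F :
  (forall i, measurable_fun setT (fun u => F u i 0)) ->
  measurable_fun setT (fun u => normG Gamma (F u)).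
Proof.
move=> mF; under eq_fun do rewrite normGE.
exact: measurableT_comp (continuous_measurable_fun (@sqrt_continuous R))
  (measurable_qform _ mF).
Qed.

Hypothesis Gamma_spd : sym_pos_def Gamma.

(* A [k]-Lipschitz [f] is the infimum of the cones
   [f q + k |q - x|_Gamma] over the rational vectors [q]. *)
Lemma measurable_lipschitz_comp F (f : 'cV[R]_d -> R) (k : R) :
  (forall i, measurable_fun setT (fun u => F u i 0)) ->
  0 <= k -> (forall y z, `|f y - f z| <= k * normG Gamma (y - z)) ->
  measurable_fun setT (fun u => f (F u)).
Proof.
move=> mF k_ge0 f_lip; apply/measurable_EFinP.
pose cone n u := (f (ratcV n) + k * normG Gamma (ratcV n - F u))%:E.
have mcone n : measurable_fun setT (cone n).
  apply/measurable_EFinP; apply: measurable_funD => //.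
  apply: measurable_funM => //.
  exact/measurable_normG/measurable_cV_subl.
apply: eq_measurable_fun (measurable_fun_einfs mcone 0) => u _.
apply/eqP; rewrite eq_le; apply/andP; split.
- apply/lee_addgt0Pr => e e_gt0.
  have [n near_n] : exists n, normG Gamma (ratcV n - F u) < e / (2 * k + 1).
    by apply: ratcV_dense => //; rewrite divr_gt0 // ltr_wpDl ?mulr_ge0.
  apply: ge_ereal_inf; exists (cone n u); first by exists n.
  have := f_lip (ratcV n) (F u); rewrite ler_norml => /andP[_ lip].
  move: near_n; rewrite ltr_pdivlMr ?ltr_wpDl ?mulr_ge0 // lee_fin.
  have := normG_ge0 Gamma (ratcV n - F u); nra.
- apply/ereal_infP => _ [n _ <-]; rewrite lee_fin.
  have := f_lip (ratcV n) (F u); rewrite ler_norml => /andP[lip _].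
  lra.
Qed.

End Measurability.

Lemma normr_sub_divr_le (R : numFieldType) (a b Z Z' : R) : 0 < Z -> 0 < Z' ->
  `|a / Z - b / Z'| <= `|a - b| / Z + `|b| * `|Z - Z'| / (Z * Z').
Proof.
move=> Z_gt0 Z'_gt0.
have -> : a / Z - b / Z' = (a - b) / Z + b * (Z' - Z) / (Z * Z').
  by field; rewrite !gt_eqF.
rewrite (le_trans (ler_normD _ _)) // !normrM !normfV (gtr0_norm Z_gt0).
by rewrite (gtr0_norm (mulr_gt0 Z_gt0 Z'_gt0)) [`|Z' - Z|]distrC.
Qed.

Lemma Lnorm_infty_le (R : realType) (dT : measure_display) (T : measurableType dT)
    (mu : {measure set T -> \bar R}) (f : T -> R) (c : R) :
  0 <= c -> (forall u, `|f u| <= c) -> (Lnorm mu +oo (EFin \o f) <= c%:E)%E.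
Proof.
move=> c_ge0 f_le; rewrite Lnorm.unlock /=; case: ifPn => _; last by rewrite lee_fin.
by apply: ess_sup_ler => u; rewrite lee_fin.
Qed.

Section RealIntegrable.
Variables (R : realType) (dT : measure_display) (T : measurableType dT).
Variable mu : {measure set T -> \bar R}.
Implicit Types f g : T -> R.

Lemma integrableB_EFin f g : mu.-integrable setT (EFin \o f) ->
  mu.-integrable setT (EFin \o g) -> mu.-integrable setT (EFin \o (f \- g)).
Proof.
move=> if_ ig; apply: (eq_integrable measurableT (fun u => (f u)%:E - (g u)%:E)%E).
  by move=> u _; rewrite /= EFinB.
exact: integrableB.
Qed.

Lemma integrableZl_EFin (c : R) f : mu.-integrable setT (EFin \o f) ->
  mu.-integrable setT (EFin \o (fun u => c * f u)).
Proof.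
move=> if_; apply: (eq_integrable measurableT (fun u => c%:E * (f u)%:E)%E).
  by move=> u _; rewrite /= EFinM.
exact: integrableZl.
Qed.

End RealIntegrable.

Section ProbabilityIntegrals.
Variables (R : realType) (dT : measure_display) (T : measurableType dT).
Variable mu : probability T R.

Lemma probability_Rintegral_cst (c : R) : \int[mu]_(u in setT) c = c.
Proof. by rewrite Rintegral_cst //= probability_setT mulr1. Qed.

Lemma integrable_bounded (f : T -> R) (M : R) : measurable_fun setT f ->
  (forall u, `|f u| <= M) -> mu.-integrable setT (EFin \o f).
Proof.
move=> mf f_le; apply: (le_integrable measurableT _ _ (finite_measure_integrable_cst mu M measurableT)).
- exact/measurable_EFinP.
- by move=> u _ /=; rewrite lee_fin (le_trans (f_le u)) ?ler_norm.
Qed.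

Lemma integrable_expRN (g : T -> R) : measurable_fun setT g ->
  (forall u, 0 <= g u) -> mu.-integrable setT (EFin \o (fun u => expR (- g u))).
Proof.
move=> mg g_ge0; apply: (integrable_bounded (M := 1)).
  exact/measurableT_comp/measurableT_comp.
by move=> u; rewrite gtr0_norm ?expR_gt0 // expR_le1 oppr_le0.
Qed.

(* Jensen's inequality, via the tangent line of [exp (- .)] at the mean. *)
Lemma expRN_Rintegral_le (g : T -> R) : (forall u, 0 <= g u) ->
  mu.-integrable setT (EFin \o g) ->
  expR (- \int[mu]_(u in setT) g u) <= \int[mu]_(u in setT) expR (- g u).
Proof.
move=> g_ge0 ig; set m := \int[mu]_(u in setT) g u; set e := expR (- m).
have mg : measurable_fun setT g by apply/measurable_EFinP; case/integrableP : ig.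
have iexp := integrable_expRN mg g_ge0.
have icst := finite_measure_integrable_cst mu (e * (1 + m)) measurableT.
have iZg := integrableZl_EFin e ig.
have itangent := integrableB_EFin icst iZg.
have tangent u : e * (1 + m) - e * g u <= expR (- g u).
  have -> : expR (- g u) = e * expR (m - g u) by rewrite -expRD addKr.
  by rewrite -mulrBr ler_wpM2l ?expR_ge0 // -addrA expR_ge1Dx.
apply: le_trans (le_Rintegral _ itangent iexp (fun u _ => tangent u)) => //.
rewrite RintegralB // probability_Rintegral_cst RintegralZl //.
by rewrite -/m mulrDr mulr1 addrK.
Qed.

End ProbabilityIntegrals.

Section Posterior.
Variables (R : realType) (d : nat) (Gamma : 'M[R]_d) (rho : 'cV[R]_d -> R).
Variables (k M C0 : R).
Hypotheses (Gamma_spd : sym_pos_def Gamma) (rho_gt0 : forall y, 0 < rho y).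
Hypotheses (k_ge0 : 0 <= k) (M_ge0 : 0 <= M) (C0_gt0 : 0 < C0).
Hypothesis rho_lip : forall y z, `|rho y - rho z| <= k * normG Gamma (y - z).
Hypothesis rho_le : forall y, rho y <= M.
Hypothesis rho_ge : forall y, C0^-1 * expR (- (normG Gamma y ^+ 2) / 2) <= rho y.
Variables (X : ptopologicalType) (mu : probability (borel X) R).
Variable L : X -> 'cV[R]_d.
Hypothesis mL : forall i, measurable_fun [set: borel X] (fun u : borel X => L u i 0).
Hypothesis L_L2 :
  (\int[mu]_(u in [set: borel X]) ((normG Gamma (L u)) ^+ 2)%:E < +oo)%E.

Let Z := Zdag mu rho L.
Let m := L2norm_sq mu Gamma L.
Let growth z := expR (normG Gamma z ^+ 2 + m).

Lemma noise_shift_lipschitz y y' x :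
  `|rho (y - x) - rho (y' - x)| <= k * normG Gamma (y - y').
Proof. by rewrite (le_trans (rho_lip _ _)) // opprB addrA subrK. Qed.

Lemma integrable_noise z :
  mu.-integrable setT (EFin \o (fun u : borel X => rho (z - L u))).
Proof.
apply: (integrable_bounded mu (M := M)); last first.
  by move=> u; rewrite gtr0_norm.
exact: measurable_lipschitz_comp (measurable_cV_subl _ mL) k_ge0 rho_lip.
Qed.

Lemma Zdag_lipschitz y y' : `|Z y - Z y'| <= k * normG Gamma (y - y').
Proof.
have idiff := integrableB_EFin (integrable_noise y) (integrable_noise y').
rewrite /Z /Zdag -RintegralB ?integrable_noise //.
apply: le_trans (le_normr_Rintegral _ idiff) _ => //.
rewrite -[leRHS](probability_Rintegral_cst mu) le_Rintegral //.
- exact: integrable_norm.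
- exact: finite_measure_integrable_cst.
- by move=> u _; exact: noise_shift_lipschitz.
Qed.

Lemma integrable_sqr_normG :
  mu.-integrable setT (EFin \o (fun u : borel X => normG Gamma (L u) ^+ 2)).
Proof.
apply/integrableP; split.
  by apply/measurable_EFinP/measurable_funX; exact: measurable_normG.
under eq_integral do rewrite /= ger0_norm ?sqr_ge0 //.
exact: L_L2.
Qed.

Lemma growth_ge1 z : 1 <= growth z.
Proof.
rewrite -expR0 ler_expR addr_ge0 ?sqr_ge0 //.
by apply: Rintegral_ge0 => u _; exact: sqr_ge0.
Qed.

Lemma Zdag_ge z : (C0 * growth z)^-1 <= Z z.
Proof.
set c := C0^-1 * expR (- normG Gamma z ^+ 2).
have c_gt0 : 0 < c by rewrite mulr_gt0 ?invr_gt0 ?expR_gt0.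
have mg : measurable_fun setT (fun u : borel X => normG Gamma (L u) ^+ 2).
  by apply/measurable_EFinP; case/integrableP : integrable_sqr_normG.
have iexp := integrable_expRN mu mg (fun u => sqr_ge0 _).
have -> : (C0 * growth z)^-1 = c * expR (- m).
  by rewrite invfM -expRN opprD expRD mulrA.
apply: le_trans (ler_wpM2l (ltW c_gt0) (expRN_Rintegral_le _ integrable_sqr_normG)) _.
  by move=> u; exact: sqr_ge0.
rewrite -RintegralZl //.
apply: le_Rintegral (integrableZl_EFin c iexp) (integrable_noise z) _ => // u _.
apply: le_trans (rho_ge (z - L u)); rewrite /c -mulrA.
apply: ler_wpM2l; first by rewrite invr_ge0 ltW.
rewrite -expRD ler_expR.
have := normG_sub_sqr_le Gamma_spd z (L u); lra.
Qed.

Lemma C0_growth_gt0 z : 0 < C0 * growth z.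
Proof. by rewrite mulr_gt0 // (lt_le_trans ltr01 (growth_ge1 z)). Qed.

Lemma Zdag_gt0 z : 0 < Z z.
Proof. by apply: lt_le_trans (Zdag_ge z); rewrite invr_gt0 C0_growth_gt0. Qed.

Lemma invZdag_le z : (Z z)^-1 <= C0 * growth z.
Proof.
rewrite -[leRHS]invrK lef_pV2 ?posrE ?Zdag_gt0 ?invr_gt0 ?C0_growth_gt0 //.
exact: Zdag_ge.
Qed.

Lemma post_density_lipschitz y y' u :
  `|post_density mu rho L y u - post_density mu rho L y' u|
    <= k * C0 * (1 + M * C0) * normG Gamma (y - y') * (growth y * growth y').
Proof.
set del := normG Gamma (y - y').
have kdel_ge0 : 0 <= k * del by rewrite mulr_ge0 ?normG_ge0.
have C0g_ge0 z : 0 <= C0 * growth z by exact/ltW/C0_growth_gt0.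
have invZ_ge0 z : 0 <= (Z z)^-1 by rewrite invr_ge0 ltW ?Zdag_gt0.
have first_le : `|rho (y - L u) - rho (y' - L u)| / Z y
    <= k * del * (C0 * growth y) * growth y'.
  apply: le_trans (_ : _ <= k * del * (C0 * growth y)) _.
    by apply: ler_pM; rewrite ?noise_shift_lipschitz ?invZdag_le.
  by rewrite ler_peMr ?growth_ge1 // mulr_ge0.
have second_le : `|rho (y' - L u)| * `|Z y - Z y'| / (Z y * Z y')
    <= M * (k * del * (C0 * growth y * (C0 * growth y'))).
  rewrite -mulrA invfM.
  apply: ler_pM; rewrite ?mulr_ge0 //; first by rewrite gtr0_norm.
  apply: ler_pM; rewrite ?mulr_ge0 ?Zdag_lipschitz //.
  by apply: ler_pM; rewrite ?invZdag_le.
have -> : k * C0 * (1 + M * C0) * del * (growth y * growth y') =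
    k * del * (C0 * growth y) * growth y'
    + M * (k * del * (C0 * growth y * (C0 * growth y'))) by ring.
apply: le_trans (lerD first_le second_le).
exact: normr_sub_divr_le (Zdag_gt0 y) (Zdag_gt0 y').
Qed.

Lemma Lnorm_post_density_sub_le y y' :
  (Lnorm mu +oo (fun u : borel X =>
      (post_density mu rho L y u - post_density mu rho L y' u)%:E)
   <= (k * C0 * (1 + M * C0) * normG Gamma (y - y')
       * expR (normG Gamma y ^+ 2 + normG Gamma y' ^+ 2 + 2 * m))%:E)%E.
Proof.
have -> : expR (normG Gamma y ^+ 2 + normG Gamma y' ^+ 2 + 2 * m)
    = growth y * growth y' by rewrite -expRD; congr expR; ring.
apply: Lnorm_infty_le => [|u]; last exact: post_density_lipschitz.
have C0_ge0 := ltW C0_gt0.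
by rewrite !mulr_ge0 ?addr_ge0 ?normG_ge0 ?expR_ge0 ?mulr_ge0.
Qed.

End Posterior.

Theorem mainTheorem9 (R : realType) (d : nat) (Gamma : 'M[R]_d)
  (rho : 'cV[R]_d -> R) :
  sym_pos_def Gamma -> noise_assumptions Gamma rho ->
  exists C : R, 0 < C /\
  forall (X : completeNormedModType R)
    (mu : probability (borel X) R) (L : X -> 'cV[R]_d),
    (exists D : set X, countable D /\ dense D) ->
    (forall i : 'I_d, measurable_fun [set: borel X] (fun u : borel X => L u i 0)) ->
    (\int[mu]_(u in [set: borel X]) ((normG Gamma (L u)) ^+ 2)%:E < +oo)%E ->
    forall y y' : 'cV[R]_d,
      (Lnorm mu +oo (fun u : borel X =>
          (post_density mu rho L y u - post_density mu rho L y' u)%:E)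
       <= (C * normG Gamma (y - y')
             * expR (normG Gamma y ^+ 2 + normG Gamma y' ^+ 2
                     + 2 * L2norm_sq mu Gamma L))%:E)%E.
Proof.
move=> Gamma_spd [rho_gt0 [[k [k_ge0 rho_lip]] [[M rho_le] [C0 [C0_gt0 rho_ge]]]]].
have M_ge0 : 0 <= M := le_trans (ltW (rho_gt0 0)) (rho_le 0).
(* [k + 1] is a Lipschitz constant as well, and keeps [C] positive. *)
have rho_lip1 y z : `|rho y - rho z| <= (k + 1) * normG Gamma (y - z).
  by rewrite (le_trans (rho_lip y z)) // ler_wpM2r ?normG_ge0 ?lerDl.
exists ((k + 1) * C0 * (1 + M * C0)); split.
  have MC0_ge0 : 0 <= M * C0 by rewrite mulr_ge0 // ltW.
  by rewrite !mulr_gt0 //; lra.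
move=> X mu L _ mL L_L2 y y'.
exact: (Lnorm_post_density_sub_le Gamma_spd rho_gt0 (addr_ge0 k_ge0 ler01)
  M_ge0 C0_gt0 rho_lip1 rho_le rho_ge mL L_L2).
Qed.
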